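(* Let $(\mathbf x,\mathbf p,\mu)$ be a deterministic TFM satisfying UIC and $1$-SCP. If $x_i(\mathbf b_{-i},b_i)=x_i(\mathbf b_{-i},b_i')$ for some bid vector $\mathbf b$, user $i$ and bid $b_i'\ge0$, then $\mu(\mathbf b_{-i},b_i)=\mu(\mathbf b_{-i},b_i')$.
   Context: Setting (TFM). Each user $i$ has a true value $v_i\ge0$ and submits a single bid $b_i\ge0$; $\mathbf b=(b_1,\dots,b_m)$, $\mathbf b_{-i}$ the other bids. A TFM has an inclusion rule (run by the miner) and confirmation, payment and miner-revenue rules (run by the blockchain on included bids). Composing the honest inclusion rule with the others gives deterministic $(\mathbf x,\mathbf p,\mu)$: $x_i(\mathbf b)\in\{0,1\}$ indicates confirmation of user $i$, $p_i(\mathbf b)\le b_i$ its payment ($0$ if unconfirmed), $\mu(\mathbf b)$ the miner revenue. Strategic players may bid untruthfully after seeing all other bids, inject fake bids (true value $0$), and (if the miner is involved) choose which bids to include. Utility: miner revenue (if the miner is in the player) plus $v-p$ for each confirmed transaction of the player with true value $v$ and payment $p$. UIC: with an honest miner each user's utility is maximized by truthful bidding, whatever the other bids. $1$-SCP: for every coalition of the miner and one user, joint utility is maximized by truthful bidding and honest miner behavior, whatever the other bids. *)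

From HB Require Import structures.
From mathcomp Require Import all_boot all_order all_algebra.
From mathcomp Require Import reals.
Set Implicit Arguments. Unset Strict Implicit. Unset Printing Implicit Defensive.
Import Order.TTheory GRing.Theory Num.Theory.
Local Open Scope ring_scope.

(* Bid vectors are sequences of reals; user i owns entry i.
   - incl b : the honest inclusion rule (run by the miner): the block, given
     as a list of indices into b (the included bids, in block order);
   - conf bs, pay bs, rev bs : the confirmation, payment and miner-revenue
     rules run by the blockchain on the list bs of included bid values;
     entry k of conf bs / pay bs refers to entry k of the block. *)
Record TFM (R : realType) := MkTFM {
  incl : seq R -> seq nat;
  conf : seq R -> seq bool;
  pay  : seq R -> seq R;
  rev  : seq R -> R }.

Definition block_bids (R : realType) (b : seq R) (B : seq nat) : seq R :=
  [seq nth 0 b j | j <- B].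

Definition valid_block (R : realType) (b : seq R) (B : seq nat) : bool :=
  uniq B && all (fun j => (j < size b)%N) B.

Definition confB (R : realType) (M : TFM R) (b : seq R) (B : seq nat) (i : nat)
  : bool :=
  (i \in B) && nth false (conf M (block_bids b B)) (index i B).

Definition payB (R : realType) (M : TFM R) (b : seq R) (B : seq nat) (i : nat)
  : R :=
  if confB M b B i then nth 0 (pay M (block_bids b B)) (index i B) else 0.

Definition revB (R : realType) (M : TFM R) (b : seq R) (B : seq nat) : R :=
  rev M (block_bids b B).

Definition x (R : realType) (M : TFM R) (b : seq R) (i : nat) : bool :=
  confB M b (incl M b) i.
Definition p (R : realType) (M : TFM R) (b : seq R) (i : nat) : R :=
  payB M b (incl M b) i.
Definition mu (R : realType) (M : TFM R) (b : seq R) : R :=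
  revB M b (incl M b).

Definition nonneg (R : realType) (s : seq R) : bool := all (fun r => 0 <= r) s.

Definition util (R : realType) (M : TFM R) (b : seq R) (B : seq nat) (i : nat)
  (v : R) : R :=
  if confB M b B i then v - payB M b B i else 0.

(* utility collected from fake bids f appended after the first n bids *)
Definition fake_util (R : realType) (M : TFM R) (b : seq R) (B : seq nat)
  (n : nat) (f : seq R) : R :=
  \sum_(k < size f) util M b B (n + k) 0.

Definition honest_valid (R : realType) (M : TFM R) : Prop :=
  forall b : seq R, valid_block b (incl M b).

Definition pay_le_bid (R : realType) (M : TFM R) : Prop :=
  forall (bs : seq R) (k : nat), (k < size bs)%N ->
    nth false (conf M bs) k -> nth 0 (pay M bs) k <= nth 0 bs k.

(* UIC: honest miner; user i with true value v prefers bidding v to bidding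
   any bi' and injecting any fake bids f (appended to the bid vector). *)
Definition UIC (R : realType) (M : TFM R) : Prop :=
  forall (b : seq R) (i : nat) (v bi' : R) (f : seq R),
    nonneg b -> (i < size b)%N -> 0 <= v -> 0 <= bi' -> nonneg f ->
    let bt := set_nth 0 b i v in
    let bd := set_nth 0 b i bi' ++ f in
    util M bd (incl M bd) i v + fake_util M bd (incl M bd) (size b) f
      <= util M bt (incl M bt) i v.

(* 1-SCP: coalition of the miner and user i; deviations: bid bi', inject fake
   bids f, and form any legal block B from the resulting bids. *)
Definition SCP1 (R : realType) (M : TFM R) : Prop :=
  forall (b : seq R) (i : nat) (v bi' : R) (f : seq R) (B : seq nat),
    nonneg b -> (i < size b)%N -> 0 <= v -> 0 <= bi' -> nonneg f ->
    let bt := set_nth 0 b i v in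
    let bd := set_nth 0 b i bi' ++ f in
    valid_block bd B ->
    revB M bd B + util M bd B i v + fake_util M bd B (size b) f
      <= mu M bt + util M bt (incl M bt) i v.

From HB Require Import structures.
From mathcomp Require Import all_boot all_order all_algebra.
From mathcomp Require Import reals.
Import Order.TTheory GRing.Theory Num.Theory.
Local Open Scope ring_scope.

(* Let b' be b with bid i changed and suppose x_i(b) = x_i(b').  UIC, applied
   to a user of true value b_i deviating to b'_i and to a user of true value
   b'_i deviating to b_i, forces p_i(b) = p_i(b') when i is confirmed, so user i
   of true value b_i gets the same utility under b and b'.  1-SCP for the
   coalition of the miner and this user, which bids b'_i and includes the
   honest block of b', then gives mu(b') <= mu(b); exchanging b and b' gives
   the converse. *)

Lemma set_nth_nth (T : Type) (x0 : T) (s : seq T) i :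
  (i < size s)%N -> set_nth x0 s i (nth x0 s i) = s.
Proof.
move=> lt_i_s; apply: (@eq_from_nth _ x0).
  by rewrite size_set_nth; apply/maxn_idPr.
by move=> j _; rewrite nth_set_nth /=; case: eqP => // ->.
Qed.

Lemma size_set_nth_lt (T : Type) (x0 : T) (s : seq T) i y :
  (i < size s)%N -> size (set_nth x0 s i y) = size s.
Proof. by move=> lt_i_s; rewrite size_set_nth (maxn_idPr lt_i_s). Qed.

Lemma set_nthK (T : Type) (x0 : T) (s : seq T) i y :
  (i < size s)%N -> set_nth x0 (set_nth x0 s i y) i (nth x0 s i) = s.
Proof. by move=> lt_i_s; rewrite set_set_nth eqxx set_nth_nth. Qed.

Section RevenueInvariance.

Variables (R : realType) (M : TFM R).

Lemma nonneg_nth (b : seq R) i : nonneg b -> 0 <= nth 0 b i.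
Proof.
move=> /all_nthP b_ge0; have [lt_i_b|ge_i_b] := ltnP i (size b).
  exact: b_ge0.
by rewrite nth_default.
Qed.

Lemma nonneg_set_nth (b : seq R) i v :
  nonneg b -> 0 <= v -> nonneg (set_nth 0 b i v).
Proof.
move=> b_ge0 v_ge0; apply/(all_nthP 0) => j _.
by rewrite nth_set_nth /=; case: eqP => // _; apply: nonneg_nth.
Qed.

Lemma fake_util_nil (b : seq R) B n : fake_util M b B n [::] = 0.
Proof. by rewrite /fake_util big_ord0. Qed.

Lemma util_honest (b : seq R) i v :
  util M b (incl M b) i v = if x M b i then v - p M b i else 0.
Proof. by []. Qed.

Hypotheses (M_valid : honest_valid M) (M_UIC : UIC M) (M_SCP1 : SCP1 M).

Lemma UIC_change_bid (b : seq R) i (bi' : R) :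
  nonneg b -> (i < size b)%N -> 0 <= bi' ->
  util M (set_nth 0 b i bi') (incl M (set_nth 0 b i bi')) i (nth 0 b i)
    <= util M b (incl M b) i (nth 0 b i).
Proof.
move=> b_ge0 lt_i_b bi'_ge0.
have := M_UIC b i (nth 0 b i) bi' [::] b_ge0 lt_i_b (nonneg_nth _ i b_ge0)
  bi'_ge0 is_true_true.
by rewrite /= set_nth_nth // cats0 fake_util_nil addr0.
Qed.

Lemma SCP1_honest_block (b : seq R) i (bi' : R) (b' := set_nth 0 b i bi') :
  nonneg b -> (i < size b)%N -> 0 <= bi' ->
  mu M b' + util M b' (incl M b') i (nth 0 b i)
    <= mu M b + util M b (incl M b) i (nth 0 b i).
Proof.
move=> b_ge0 lt_i_b bi'_ge0.
have := M_SCP1 b i (nth 0 b i) bi' [::] (incl M b') b_ge0 lt_i_b (nonneg_nth _ i b_ge0)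
  bi'_ge0 is_true_true.
by rewrite /= set_nth_nth // cats0 fake_util_nil addr0; apply; apply: M_valid.
Qed.

Lemma util_eq_of_x_eq (b : seq R) i (bi' : R) (b' := set_nth 0 b i bi') :
  nonneg b -> (i < size b)%N -> 0 <= bi' -> x M b i = x M b' i ->
  util M b' (incl M b') i (nth 0 b i) = util M b (incl M b) i (nth 0 b i).
Proof.
move=> b_ge0 lt_i_b bi'_ge0 x_eq.
have b'_ge0 : nonneg b' by apply: nonneg_set_nth.
have lt_i_b' : (i < size b')%N by rewrite size_set_nth_lt.
have le_b'_b := UIC_change_bid b i bi' b_ge0 lt_i_b bi'_ge0.
have := UIC_change_bid b' i (nth 0 b i) b'_ge0 lt_i_b' (nonneg_nth _ i b_ge0).
rewrite !util_honest in le_b'_b *.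
rewrite [set_nth _ _ _ _]set_nthK // nth_set_nth /= eqxx -x_eq.
rewrite -/b' -x_eq in le_b'_b.
case: (x M b i) le_b'_b => // le_b'_b le_b_b'.
rewrite !lerD2l !lerN2 in le_b'_b le_b_b'.
by rewrite (@le_anti _ _ (p M b' i) (p M b i)) // le_b'_b le_b_b'.
Qed.

Lemma mu_le_of_x_eq (b : seq R) i (bi' : R) :
  nonneg b -> (i < size b)%N -> 0 <= bi' -> x M b i = x M (set_nth 0 b i bi') i ->
  mu M (set_nth 0 b i bi') <= mu M b.
Proof.
move=> b_ge0 lt_i_b bi'_ge0 x_eq.
have := SCP1_honest_block b i bi' b_ge0 lt_i_b bi'_ge0.
by rewrite util_eq_of_x_eq // lerD2r.
Qed.

End RevenueInvariance.

Theorem mainTheorem11 (R : realType) (M : TFM R) :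
  honest_valid M -> pay_le_bid M -> UIC M -> SCP1 M ->
  forall (b : seq R) (i : nat) (bi' : R),
    nonneg b -> (i < size b)%N -> 0 <= bi' ->
    x M b i = x M (set_nth 0 b i bi') i ->
    mu M b = mu M (set_nth 0 b i bi').
Proof.
move=> M_valid _ M_UIC M_SCP1 b i bi' b_ge0 lt_i_b bi'_ge0 x_eq.
apply: le_anti; rewrite mu_le_of_x_eq // andbT.
have := @mu_le_of_x_eq _ M M_valid M_UIC M_SCP1 (set_nth 0 b i bi') i (nth 0 b i).
rewrite set_nthK //; apply.
- exact: nonneg_set_nth.
- by rewrite size_set_nth_lt.
- exact: nonneg_nth.
- by rewrite x_eq.
Qed.
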